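(* The number of active faces without pre-image in the tower $(\mathcal{X}_{\alpha_s})_{s\ge0}$ is at most $n3^d$; that is, the number of active faces of $\square_{\alpha_0}$ plus, summed over all $s\ge0$, the number of active faces of $\square_{\alpha_{s+1}}$ that are not of the form $g_{\alpha_s}(f)$ for an active face $f$ of $\square_{\alpha_s}$, is at most $n3^d$.
   Context: Let $P\subset\mathbb{R}^d$ with $n=|P|$, and let $CP(P)$ be the closest-pair (Euclidean) distance of $P$. Scales $\alpha_s=\lambda2^s$ with $\lambda=CP(P)/(3d)$. Grids $G_{\alpha_s}\subset\mathbb{R}^d$: $G_{\alpha_0}=\lambda\mathbb{Z}^d$ and $G_{\alpha_{s+1}}=2(G_{\alpha_s}-O_s)+O_s+\frac{\alpha_s}{2}\varepsilon_s$ with $O_s\in G_{\alpha_s}$, $\varepsilon_s\in\{-1,1\}^d$. $\square_{\alpha_s}$: cubical complex of faces $\prod_j[x_j,x_j+m_j]$, $x\in G_{\alpha_s}$, $m_j\in\{0,\alpha_s\}$. $a_{\alpha_s}(p)$: the point of $G_{\alpha_s}$ whose Voronoi cell (closed cube of side $\alpha_s$ centered at it) contains $p$, assumed unique; active vertices $V_{\alpha_s}=a_{\alpha_s}(P)$. A face $f$ is spanned by $V$ if $f\cap V\ne\emptyset$ and $f\cap V$ lies in no facet of $f$; active faces are those spanned by $V_{\alpha_s}$. $g_{\alpha_s}$ maps $x\in G_{\alpha_s}$ to the unique $y\in G_{\alpha_{s+1}}$ whose Voronoi cell contains $x$, and a face to the convex hull of the images of its vertices (which maps active faces to active faces). $\mathcal{X}_{\alpha_s}$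 is the union over maximal active faces $f$ of the barycentric subdivisions of $f$, connected by the simplicial maps induced by $g$. *)

From HB Require Import structures.
From mathcomp Require Import all_boot all_order all_algebra.
From mathcomp Require Import classical_sets boolp reals.
Set Implicit Arguments. Unset Strict Implicit. Unset Printing Implicit Defensive.
Import Order.TTheory GRing.Theory Num.Theory.
Local Open Scope classical_set_scope.
Local Open Scope ring_scope.

Section Tower.
Variables (R : realType) (d : nat).
Notation pt := 'rV[R]_d.

Definition edist (p q : pt) : R := Num.sqrt (\sum_(j < d) (p 0 j - q 0 j) ^+ 2).

Definition is_CP (P : seq pt) (c : R) : Prop :=
  (exists p q, [/\ p \in P, q \in P, p != q & edist p q = c]) /\
  (forall p q, p \in P -> q \in P -> p != q -> c <= edist p q).

Definition conv (S : set pt) : set pt :=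
  [set z : pt | exists (k : nat) (w : 'I_k -> R) (y : 'I_k -> pt),
     [/\ forall i, 0 <= w i, \sum_(i < k) w i = 1, forall i, S (y i)
       & z = \sum_(i < k) w i *: y i]].

(* closed cube of side a centered at y (Voronoi cell of a grid point) *)
Definition cell (a : R) (y : pt) : set pt :=
  [set p : pt | forall j, `|p 0 j - y 0 j| <= a / 2].

(* the face prod_j [x_j, x_j + m_j * a] as a subset of R^d *)
Definition box (a : R) (x : pt) (m : {ffun 'I_d -> bool}) : set pt :=
  [set v : pt | forall j, if m j then x 0 j <= v 0 j <= x 0 j + a else v 0 j == x 0 j].

Definition box_vertex (a : R) (x : pt) (m : {ffun 'I_d -> bool}) : set pt :=
  [set v : pt | forall j, v 0 j = x 0 j \/ (m j /\ v 0 j = x 0 j + a)].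

Definition face_dim (m : {ffun 'I_d -> bool}) : nat := #|[pred j | m j]|.

Variables (P : seq pt) (lam : R) (O : nat -> pt) (eps : nat -> pt).

Definition alpha (s : nat) : R := lam * 2 ^+ s.

Fixpoint grid (s : nat) : set pt :=
  match s with
  | 0 => [set x | exists z : 'I_d -> int, x = \row_j (lam * (z j)%:~R)]
  | s'.+1 => [set (2 : R) *: (y - O s') + O s' + (alpha s' / 2) *: eps s'
             | y in grid s']
  end.

Definition vor (s : nat) (y : pt) : set pt := cell (alpha s) y.

Definition active_vtx (s : nat) (y : pt) : Prop :=
  grid s y /\ exists2 p, p \in P & vor s y p.

Definition face (s : nat) x m := box (alpha s) x m.

Definition is_facet (s : nat) (x' : pt) (m' : {ffun 'I_d -> bool})
    (x : pt) (m : {ffun 'I_d -> bool}) : Prop :=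
  [/\ grid s x', face s x' m' `<=` face s x m & (face_dim m').+1 = face_dim m].

Definition spanned (s : nat) (x : pt) (m : {ffun 'I_d -> bool}) : Prop :=
  (exists y, active_vtx s y /\ face s x m y) /\
  (forall x' m', is_facet s x' m' x m ->
     ~ (forall y, active_vtx s y -> face s x m y -> face s x' m' y)).

Definition active (s : nat) (x : pt) (m : {ffun 'I_d -> bool}) : Prop :=
  grid s x /\ spanned s x m.

(* g_{alpha_s} on points, as a relation: y is the point of G_{alpha_{s+1}}
   whose Voronoi cell contains x *)
Definition gpt (s : nat) (x y : pt) : Prop := grid s.+1 y /\ vor s.+1 y x.

Definition gface (s : nat) (x : pt) (m : {ffun 'I_d -> bool}) : set pt :=
  conv [set y | exists v, box_vertex (alpha s) x m v /\ gpt s v y].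

Definition no_preimage (s : nat) (x : pt) (m : {ffun 'I_d -> bool}) : Prop :=
  match s with
  | 0 => active 0 x m
  | s'.+1 => active s x m /\
      ~ (exists x0 m0, active s' x0 m0 /\ face s x m = gface s' x0 m0)
  end.

End Tower.

From HB Require Import structures.
From mathcomp Require Import all_boot all_order all_algebra.
From mathcomp Require Import classical_sets boolp reals.
From mathcomp Require Import zify ring lra.
Set Implicit Arguments. Unset Strict Implicit. Unset Printing Implicit Defensive.
Import Order.TTheory GRing.Theory Num.Theory.
Local Open Scope classical_set_scope.
Local Open Scope ring_scope.

(** In grid coordinates the map [g] becomes coordinatewise halving
    [z |-> floor ((z + h) / 2)], and the index of the active vertex of each point
    of [P] evolves by the same map.  An active face without preimage, with free
    directions [M] at scale [s], is charged to a pair [(p, c)]: [p] has its vertex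
    in the face and [c] in {fixed, lower, upper}^d records [M] and the side of the
    face on which that vertex lies.  Choosing [p] so that, at every earlier scale,
    the face anchored at [p] with pattern [c] is inactive, the face is recovered
    from [(p, c)] as the anchored face at the first scale where it is active; so
    the charge is injective and there are at most [n 3^d] such faces.

    Such a [p] exists: otherwise every point of the face has an active anchored
    face at an earlier scale, which supplies a point across it in each free
    direction, and offsets in [0, 1] survive halving.  Walking along these points
    (each step moves strictly in the order at scale 0, so walks terminate) reaches
    points in the two middle layers of the preimage block on both sides of every
    free direction; they span an active face at scale [s - 1] that [g] maps onto
    the given face. *)

Lemma count_lt_subpred (T : eqType) (a b : pred T) (s : seq T) (x : T) :
  subpred a b -> x \in s -> b x -> ~~ a x -> (count a s < count b s)%N.
Proof.
move=> ab; elim: s => [//|y s IH]; rewrite inE => /orP[/eqP <-|xs] bx nax /=.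
  by rewrite bx (negbTE nax) add0n add1n ltnS sub_count.
have := IH xs bx nax; case ay: (a y); first by rewrite (ab _ ay).
by case: (b y) => /=; lia.
Qed.

Lemma size_le_of_injective_rel (A B : eqType) (L : seq A) (C : seq B) (r : A -> B -> Prop) :
  uniq L -> (forall a, a \in L -> exists2 b, b \in C & r a b) ->
  (forall a1 a2 b, a1 \in L -> a2 \in L -> r a1 b -> r a2 b -> a1 = a2) ->
  (size L <= size C)%N.
Proof.
move=> uL code inj; case: L => [//|a0 L'] in uL code inj *.
have [b0 _ _] := code a0 (mem_head _ _).
have /choice [f fP] : forall a, exists b, a \in a0 :: L' -> b \in C /\ r a b.
  move=> a; case: (boolP (a \in a0 :: L')) => [aL|_]; last by exists b0.
  by have [b bC rab] := code a aL; exists b.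
rewrite -(size_map f); apply: uniq_leq_size.
  rewrite map_inj_in_uniq // => a1 a2 a1L a2L f12.
  by apply: (inj _ _ (f a1)) => //; [apply: (fP _ a1L).2 | rewrite f12; apply: (fP _ a2L).2].
by move=> _ /mapP[a /fP[fC _] ->].
Qed.

Section HalvingTower.
Variables (d : nat) (T : eqType) (P : seq T).
Variables (A : nat -> T -> 'I_d -> int) (h : nat -> 'I_d -> int).

Definition halve t j (z : int) : int := ((z + h t j) %/ 2)%Z.

Hypothesis A_halve : forall t p j, p \in P -> A t.+1 p j = halve t j (A t p j).

Definition in_box (x : 'I_d -> int) (m : {ffun 'I_d -> bool}) (z : 'I_d -> int) :=
  [forall j, (z j == x j) || m j && (z j == x j + 1)].

Definition active_box t x m : Prop :=
  (exists2 p, p \in P & in_box x m (A t p)) /\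
  forall k, m k ->
    (exists2 p, p \in P & in_box x m (A t p) /\ A t p k = x k) /\
    (exists2 p, p \in P & in_box x m (A t p) /\ A t p k = x k + 1).

Definition halves_onto t x0 (m0 : {ffun 'I_d -> bool}) y (M : {ffun 'I_d -> bool}) : Prop :=
  forall j, halve t j (x0 j) = y j /\
    if M j then m0 j /\ halve t j (x0 j + 1) = y j + 1
    else m0 j -> halve t j (x0 j + 1) = y j.

Definition born t x m : Prop :=
  active_box t x m /\
  if t is t'.+1 then ~ exists x0 m0, active_box t' x0 m0 /\ halves_onto t' x0 m0 x m
  else True.

(* The box of free directions [M] having [z] as its lower corner in the
   directions of [U] and as its upper corner in the other free directions. *)
Definition anchor (z : 'I_d -> int) (M : {ffun 'I_d -> bool}) (U : 'I_d -> bool) j :=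
  if M j && ~~ U j then z j - 1 else z j.

Lemma in_boxP x (m : {ffun 'I_d -> bool}) z :
  reflect (forall j, z j = x j \/ m j /\ z j = x j + 1) (in_box x m z).
Proof.
apply: (iffP forallP) => H j; have := H j.
  by case/orP => [/eqP->|/andP[-> /eqP->]]; [left|right].
by case=> [->|[-> ->]]; rewrite eqxx ?orbT.
Qed.

Lemma in_box_refl x (m : {ffun 'I_d -> bool}) : in_box x m x.
Proof. by apply/forallP => j; rewrite eqxx. Qed.

Lemma in_anchorP (z : 'I_d -> int) (M : {ffun 'I_d -> bool}) (U : 'I_d -> bool) w :
  reflect (forall j, if M j then (if U j then 0 <= w j - z j <= 1 else -1 <= w j - z j <= 0)
                     else w j == z j)
          (in_box (anchor z M U) M w).
Proof.
apply: (iffP (in_boxP _ _ _)) => H j; have := H j; rewrite /anchor.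
  case: (M j) => [|[->|[]//]]; last by rewrite eqxx.
  by case: (U j) => /= -[->|[_ ->]]; lia.
case: (M j) => [|/eqP->]; last by left.
case: (U j) => /= ?.
  by case: (lerP (w j) (z j)) => ?; [left|right]; lia.
by case: (lerP (w j) (z j - 1)) => ?; [left|right]; lia.
Qed.

Lemma anchor_box_propagate t n p q (M : {ffun 'I_d -> bool}) U : p \in P -> q \in P ->
  in_box (anchor (A t p) M U) M (A t q) ->
  in_box (anchor (A (n + t) p) M U) M (A (n + t) q).
Proof.
move=> pP qP Hpq; elim: n => [//|n /in_anchorP IH]; apply/in_anchorP => j.
by have := IH j; rewrite addSn !A_halve // /halve; case: (M j); case: (U j); lia.
Qed.

Lemma A_le_propagate n p q j : p \in P -> q \in P ->
  A 0 q j <= A 0 p j -> A n q j <= A n p j.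
Proof.
by move=> pP qP H; elim: n => [//|n IH]; rewrite !A_halve // /halve; lia.
Qed.

Section Target.
Variables (s : nat) (y : 'I_d -> int) (M : {ffun 'I_d -> bool}).

(* The box [(y, M)] at scale [s + 1] halves back to the layers [base] ...
   [base + 3] (free directions) or [base], [base + 1] (fixed ones) at scale [s];
   [inner] marks the two middle layers. *)
Definition base k := 2 * y k - h s k.
Definition in_target p := (p \in P) && in_box y M (A s.+1 p).
Definition lower p k := A s.+1 p k == y k.
Definition inner p k := (A s p k == base k + 1) || (A s p k == base k + 2).
Definition inner_all p := [forall l, M l ==> inner p l].
Definition earlier_active p :=
  exists2 t, (t <= s)%N & active_box t (anchor (A t p) M (lower p)) M.

Lemma target_range p k : in_target p ->
  if M k then base k <= A s p k <= base k + 3 /\ lower p k = (A s p k <= base k + 1)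
  else base k <= A s p k <= base k + 1.
Proof.
case/andP=> pP /in_boxP /(_ k); rewrite /lower A_halve // /halve /base.
case: (M k) => [[E|[_ E]]|[E|[]//]]; last lia.
  by rewrite E eqxx; split; [lia|apply/esym/idP; lia].
by rewrite E; split; [lia|apply/idP/idP => [/eqP|]; lia].
Qed.

Lemma in_target_anchor p q : in_target p -> q \in P ->
  in_box (anchor (A s p) M (lower p)) M (A s q) -> in_target q.
Proof.
move=> Sp qP /in_anchorP Hq; rewrite /in_target qP; apply/in_boxP => j.
have := Hq j; have := target_range j Sp; rewrite A_halve // /halve /base.
case: (M j) => [[Hr ->]|Hr /eqP->]; last by left; lia.
by case: lerP => /= ? ?; lia.
Qed.

Lemma inner_anchor p q l : in_target p -> M l ->
  in_box (anchor (A s p) M (lower p)) M (A s q) -> inner p l -> inner q l.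
Proof.
move=> Sp Ml /in_anchorP /(_ l); have := target_range l Sp.
by rewrite Ml /inner => -[_ ->]; case: lerP => /= *; lia.
Qed.

Lemma inner_flip p q k : in_target p -> in_target q -> M k ->
  in_box (anchor (A s p) M (lower p)) M (A s q) -> lower q k != lower p k -> inner q k.
Proof.
move=> Sp Sq Mk /in_anchorP /(_ k); have := target_range k Sp; have := target_range k Sq.
by rewrite Mk /inner => -[_ ->] [_ ->]; case: lerP; case: lerP => /= *; lia.
Qed.

(* The active anchored box supplies a point across [p] in direction [k], and
   membership in the anchored box persists up to scale [s]. *)
Lemma escape_step p k : in_target p -> M k -> earlier_active p ->
  exists2 q, in_target q & in_box (anchor (A s p) M (lower p)) M (A s q) /\
    (if lower p k then A 0 p k < A 0 q k else A 0 q k < A 0 p k).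
Proof.
move=> Sp Mk [t ts [_ act]]; have pP : p \in P by case/andP: Sp.
have [[q1 q1P [in1 E1]] [q2 q2P [in2 E2]]] := act k Mk.
pose q := if lower p k then q2 else q1.
have qP : q \in P by rewrite /q; case: ifP.
have in_t : in_box (anchor (A t p) M (lower p)) M (A t q) by rewrite /q; case: ifP.
have Eq : A t q k = A t p k + (if lower p k then 1 else -1).
  by rewrite /q; move: E1 E2; rewrite /anchor Mk; case: (lower p k) => /= E1 E2;
    [rewrite E2 | rewrite E1]; lia.
have in_s : in_box (anchor (A s p) M (lower p)) M (A s q).
  by rewrite -(subnK ts); apply: anchor_box_propagate.
exists q; first exact: in_target_anchor in_s.
split=> //; case: (lower p k) Eq => Eq; rewrite ltNge; apply/negP.
  by move/(A_le_propagate t pP qP); lia.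
by move/(A_le_propagate t qP pP); lia.
Qed.

Definition beyond (b : bool) k p :=
  count (fun r => if b then A 0 p k < A 0 r k else A 0 r k < A 0 p k) P.

Lemma beyond_lt b k p q : q \in P ->
  (if b then A 0 p k < A 0 q k else A 0 q k < A 0 p k) -> (beyond b k q < beyond b k p)%N.
Proof.
move=> qP H; apply: (count_lt_subpred (x := q)) => //=; last by case: b {H}; rewrite ltxx.
by move=> r /=; case: b H; lia.
Qed.

Lemma cross_side k p : (forall p, in_target p -> earlier_active p) -> M k -> in_target p ->
  exists q, [/\ in_target q, inner q k, lower q k = ~~ lower p k &
                forall l, M l -> inner p l -> inner q l].
Proof.
move=> all_earlier Mk; have [n] := ubnP (beyond (lower p k) k p).
elim: n p => // n IH p lt_n Sp.
have [q Sq [in_q beyond_q]] := escape_step Sp Mk (all_earlier p Sp).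
have inner_pq l : M l -> inner p l -> inner q l by move=> Ml; apply: inner_anchor in_q.
have qP : q \in P by case/andP: Sq.
case: (boolP (lower q k == lower p k)) => [/eqP same | flip].
  have lt_q : (beyond (lower q k) k q < n)%N.
    by rewrite same; apply: leq_trans (beyond_lt qP beyond_q) _.
  have [q' [Sq' Iq' Lq' pres]] := IH q lt_q Sq.
  by exists q'; split=> // [|l Ml /(inner_pq l Ml)]; [rewrite Lq' same | apply: pres].
exists q; split=> //; first exact: inner_flip in_q flip.
by move: flip; case: (lower q k); case: (lower p k).
Qed.

Lemma inner_all_exists p : (forall p, in_target p -> earlier_active p) -> in_target p ->
  exists2 q, in_target q & inner_all q.
Proof.
move=> all_earlier Sp.
suff [q Sq Iq] : exists2 q, in_target q & forall l, l \in enum 'I_d -> M l -> inner q l.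
  by exists q => //; apply/forallP => l; apply/implyP; apply: Iq; rewrite mem_enum.
elim: (enum 'I_d) => [|k K [q Sq Iq]]; first by exists p.
case: (boolP (M k)) => Mk.
  have [q' [Sq' Iq'k _ pres]] := cross_side all_earlier Mk Sq.
  by exists q' => // l; rewrite inE => /orP[/eqP-> //|lK] Ml; apply/pres/Iq.
by exists q => // l; rewrite inE => /orP[/eqP->|/Iq //]; rewrite (negbTE Mk).
Qed.

Definition inner_points := [seq r <- P | in_target r && inner_all r].
Definition attains j v := has (fun r => A s r j == v) inner_points.
Definition preimage_corner j :=
  if M j then base j + 1 else if attains j (base j) then base j else base j + 1.
Definition preimage_dirs := [ffun j => M j || attains j (base j) && attains j (base j + 1)].

Lemma halves_onto_preimage : halves_onto s preimage_corner preimage_dirs y M.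
Proof.
move=> j; rewrite /preimage_corner /preimage_dirs ffunE /halve /base.
by case: (M j); [|case: (attains j (base j))] => /=; split=> //; lia.
Qed.

Lemma mem_inner_points r : (r \in inner_points) = in_target r && inner_all r.
Proof. by rewrite mem_filter; apply/andb_idr => /andP[Sr _]; case/andP: Sr. Qed.

Lemma inner_points_value r k : r \in inner_points -> M k ->
  A s r k = base k + (if lower r k then 1 else 2).
Proof.
rewrite mem_inner_points => /andP[Sr /forallP/(_ k) Ir] Mk.
move: (target_range k Sr) Ir; rewrite Mk /= /inner => -[_ ->].
by case: lerP => /= ? /orP[] /eqP; lia.
Qed.

Lemma inner_points_in_box r : r \in inner_points ->
  in_box preimage_corner preimage_dirs (A s r).
Proof.
move=> rR; apply/in_boxP => j; rewrite /preimage_corner /preimage_dirs ffunE.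
case Mj: (M j) => /=.
  by rewrite (inner_points_value rR Mj); case: (lower r j); [left|right; split; lia].
have Sr : in_target r by move: rR; rewrite mem_inner_points => /andP[].
have [E|E] : A s r j = base j \/ A s r j = base j + 1.
- by move: (target_range j Sr); rewrite Mj; lia.
- have -> : attains j (base j) by apply/hasP; exists r; rewrite ?E.
  by left.
- case: attains => /=; [right; split => // | by left].
  by apply/hasP; exists r; rewrite ?E.
Qed.

Lemma active_preimage : (exists r, r \in inner_points) ->
  (forall k b, M k -> exists2 r, r \in inner_points & lower r k = b) ->
  active_box s preimage_corner preimage_dirs.
Proof.
have inP r : r \in inner_points -> r \in P.
  by rewrite mem_inner_points => /andP[/andP[]].
move=> [r0 r0R] sides; split; first by exists r0; [exact: inP | exact: inner_points_in_box].
move=> k; rewrite /preimage_dirs ffunE; case Mk: (M k) => /=.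
  have [[rl rlR Ll] [rh rhR Lh]] := (sides k true Mk, sides k false Mk); move=> _.
  split; [exists rl | exists rh]; rewrite ?inP //; split; rewrite ?inner_points_in_box //.
    by rewrite (inner_points_value rlR Mk) Ll /preimage_corner Mk.
  by rewrite (inner_points_value rhR Mk) Lh /preimage_corner Mk; lia.
case/andP=> lo_att /hasP[r2 r2R /eqP E2]; move/hasP: (lo_att) => [r1 r1R /eqP E1].
split; [exists r1 | exists r2]; rewrite ?inP //; split; rewrite ?inner_points_in_box //.
  by rewrite E1 /preimage_corner Mk lo_att.
by rewrite E2 /preimage_corner Mk lo_att.
Qed.

Lemma exists_not_earlier_active : active_box s.+1 y M ->
  ~ (exists x0 m0, active_box s x0 m0 /\ halves_onto s x0 m0 y M) ->
  exists2 p, in_target p & ~ earlier_active p.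
Proof.
move=> [[p0 p0P in0] _] no_pre; apply: contrapT => none.
have all_earlier p : in_target p -> earlier_active p.
  by move=> Sp; apply: contrapT => np; apply: none; exists p.
have S0 : in_target p0 by apply/andP.
apply: no_pre; exists preimage_corner, preimage_dirs; split; last exact: halves_onto_preimage.
have [r0 S1 I1] := inner_all_exists all_earlier S0.
have flip k r : M k -> r \in inner_points ->
    exists2 q, q \in inner_points & lower q k = ~~ lower r k.
  rewrite mem_inner_points => Mk /andP[Sr Ir].
  have [q [Sq _ Lq pres]] := cross_side all_earlier Mk Sr; exists q => //.
  rewrite mem_inner_points Sq; apply/forallP => l; apply/implyP => Ml.
  by apply: pres => //; move/forallP: Ir => /(_ l) /implyP; apply.
have r0R : r0 \in inner_points by rewrite mem_inner_points S1 I1.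
apply: active_preimage; first by exists r0.
move=> k b Mk; have [<-|ne] := eqVneq (lower r0 k) b; first by exists r0.
have [q qR Lq] := flip k r0 Mk r0R; exists q; rewrite // Lq.
by move: ne; case: b; case: (lower r0 k).
Qed.

End Target.

(* [None] marks a fixed direction, [Some b] a free one on whose lower side the
   charged point lies iff [b]: there are [3 ^ d] codes. *)
Definition code := {ffun 'I_d -> option bool}.
Definition dirs_of (c : code) : {ffun 'I_d -> bool} := [ffun j => c j != None].
Definition lows_of (c : code) j := c j == Some true.
Definition code_of (m : {ffun 'I_d -> bool}) (U : 'I_d -> bool) : code :=
  [ffun j => if m j then Some (U j) else None].

Definition charged t x m (pc : T * code) :=
  [/\ pc.1 \in P, m = dirs_of pc.2, x = anchor (A t pc.1) m (lows_of pc.2),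
      active_box t x m &
      forall t', (t' < t)%N -> ~ active_box t' (anchor (A t' pc.1) m (lows_of pc.2)) m].

Lemma anchor_congr z (m : {ffun 'I_d -> bool}) U V :
  (forall j, m j -> U j = V j) -> anchor z m U = anchor z m V.
Proof. by move=> UV; apply: funext => j; rewrite /anchor; case: (boolP (m j)) => // /UV->. Qed.

Lemma anchor_self z (m : {ffun 'I_d -> bool}) x :
  in_box x m z -> anchor z m (fun j => z j == x j) = x.
Proof.
move/in_boxP => H; apply: funext => j; rewrite /anchor.
case: (H j) => [->|[-> ->]]; first by rewrite eqxx andbF.
by rewrite ifT ?addrK //=; apply/eqP; lia.
Qed.

Lemma code_ofK (m : {ffun 'I_d -> bool}) (U : 'I_d -> bool) :
  dirs_of (code_of m U) = m /\ forall j, m j -> lows_of (code_of m U) j = U j.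
Proof.
split; first by apply/ffunP => j; rewrite !ffunE; case: (m j).
by move=> j mj; rewrite /lows_of ffunE mj; case: (U j).
Qed.

Lemma born_charged t x m : born t x m -> exists pc, charged t x m pc.
Proof.
have charge p t0 (act : active_box t0 x m) : p \in P -> in_box x m (A t0 p) ->
    (forall t', (t' < t0)%N ->
       ~ active_box t' (anchor (A t' p) m (fun j => A t0 p j == x j)) m) ->
    charged t0 x m (p, code_of m (fun j => A t0 p j == x j)).
  move=> pP inx early; have [dirsE lowsE] := code_ofK m (fun j => A t0 p j == x j).
  split=> //=; rewrite ?dirsE //.
  - by rewrite (anchor_congr _ lowsE) anchor_self.
  - by move=> t' lt_t'; rewrite (anchor_congr _ lowsE); apply: early.
case: t => [|s] [act no_pre].
  by have [[p pP inx] _] := act; eexists; apply: (charge p) => // t'; rewrite ltn0.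
have [p /andP[pP inx] unearly] := exists_not_earlier_active act no_pre.
by eexists; apply: (charge p) => // t' lt_t' act'; apply: unearly; exists t'.
Qed.

Lemma charged_inj t1 x1 m1 t2 x2 m2 pc :
  charged t1 x1 m1 pc -> charged t2 x2 m2 pc -> [/\ t1 = t2, x1 = x2 & m1 = m2].
Proof.
case=> _ m1E x1E act1 early1 [_ m2E x2E act2 early2]; rewrite -m2E in m1E; subst m1.
have t12 : t1 = t2.
  case: (ltngtP t1 t2) => // lt; [case: (early2 _ lt) | case: (early1 _ lt)];
    by rewrite -?x1E -?x2E.
by subst t2; split; rewrite // x1E x2E.
Qed.

Theorem born_family_size (E : eqType) (L : seq E)
    (box_of : E -> nat * ('I_d -> int) * {ffun 'I_d -> bool}) :
  uniq L -> {in L &, injective box_of} ->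
  (forall e, e \in L -> born (box_of e).1.1 (box_of e).1.2 (box_of e).2) ->
  (size L <= size P * 3 ^ d)%N.
Proof.
move=> uL inj bornL.
have <- : size [seq (p, c) | p <- P, c <- enum {: code}] = (size P * 3 ^ d)%N.
  by rewrite size_allpairs -cardE card_ffun card_option card_bool card_ord.
apply: (size_le_of_injective_rel
  (r := fun e pc => charged (box_of e).1.1 (box_of e).1.2 (box_of e).2 pc)) => //.
  move=> e eL; have [[p c] Hpc] := born_charged (bornL e eL); exists (p, c) => //.
  by case: Hpc => /= pP _ _ _ _; rewrite allpairs_f ?mem_enum.
move=> e1 e2 pc e1L e2L H1 H2; apply: inj => //.
move: (box_of e1) (box_of e2) H1 H2 => [[t1 x1] m1] [[t2 x2] m2] /= H1 H2.
by have [-> -> ->] := charged_inj H1 H2.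
Qed.

End HalvingTower.

Lemma intr_near_eq (R : realDomainType) (a b : int) :
  `|a%:~R - b%:~R : R| < 1 -> a = b.
Proof. by rewrite -intrB -intr_norm ltrz1 => ?; lia. Qed.

Lemma halve_nearest (R : realFieldType) (z Y tau : int) (e : R) :
  (e = 1 /\ tau = 0) \/ (e = -1 /\ tau = 1) ->
  `|(z%:~R - e / 2) / 2 - ((z + tau) %/ 2)%Z%:~R| <= 1 / 4 /\
  (`|(z%:~R - e / 2) / 2 - Y%:~R| <= 1 / 2 <-> Y = ((z + tau) %/ 2)%Z).
Proof.
move=> He; set q := ((z + tau) %/ 2)%Z; set r := ((z + tau) %% 2)%Z.
have r01 : r = 0 \/ r = 1 by rewrite /r; lia.
have zE : z%:~R = q%:~R * 2 + r%:~R - tau%:~R :> R.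
  by rewrite -[z](addrK tau) {1}(divz_eq (z + tau) 2) -/q -/r !(intrB, intrD, intrM).
have near_q : `|(z%:~R - e / 2) / 2 - q%:~R| <= 1 / 4.
  rewrite zE ler_norml.
  by case: He => -[-> ->]; case: r01 => ->; rewrite ?mulr0z ?mulr1z; lra.
split=> //; split=> [near_Y|->]; last by apply: le_trans near_q _; lra.
apply/esym/intr_near_eq; move: near_Y near_q; rewrite !ler_norml ltr_norml; lra.
Qed.

Section Convexity.
Variables (R : realType) (d : nat).
Implicit Types (S : set 'rV[R]_d) (a : R) (x z : 'rV[R]_d) (m : {ffun 'I_d -> bool}).

Lemma conv_subset S S' : S `<=` S' -> conv S `<=` conv S'.
Proof. by move=> SS' z [k [w [y [w0 w1 Sy ->]]]]; exists k, w, y; split=> // i; apply: SS'. Qed.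

Lemma conv_point S z : S z -> conv S z.
Proof.
move=> Sz; exists 1%N, (fun _ => 1), (fun _ => z).
by split=> //; rewrite big_ord1 ?scale1r.
Qed.

Lemma conv_segment S z1 z2 (t : R) : conv S z1 -> conv S z2 -> 0 <= t <= 1 ->
  conv S ((1 - t) *: z1 + t *: z2).
Proof.
move=> [k1 [w1 [y1 [w1_ge0 w1_sum Sy1 ->]]]] [k2 [w2 [y2 [w2_ge0 w2_sum Sy2 ->]]]].
move=> /andP[t0 t1].
pose w i := match split i with inl i1 => (1 - t) * w1 i1 | inr i2 => t * w2 i2 end.
pose y i := match split i with inl i1 => y1 i1 | inr i2 => y2 i2 end.
have splitl i : split (lshift k2 i) = inl i := unsplitK (inl _ i).
have splitr i : split (rshift k1 i) = inr i := unsplitK (inr _ i).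
exists (k1 + k2)%N, w, y; split.
- by move=> i; rewrite /w; case: (split i) => j; apply: mulr_ge0 => //; lra.
- rewrite big_split_ord.
  rewrite (eq_bigr (fun i => (1 - t) * w1 i)) => [|i _]; last by rewrite /w splitl.
  rewrite (eq_bigr (fun i => t * w2 i)) => [|i _]; last by rewrite /w splitr.
  by rewrite -!mulr_sumr w1_sum w2_sum /=; lra.
- by move=> i; rewrite /y; case: (split i).
- rewrite big_split_ord !scaler_sumr; congr (_ + _); apply: eq_bigr => i _.
    by rewrite /w /y splitl scalerA.
  by rewrite /w /y splitr scalerA.
Qed.

Lemma conv_sub_box S a x m : S `<=` box a x m -> conv S `<=` box a x m.
Proof.
move=> SB z [k [w [y [w_ge0 w_sum Sy ->]]]] j.
have zE : (\sum_(i < k) w i *: y i) 0 j = \sum_(i < k) w i * y i 0 j.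
  by rewrite summxE; apply: eq_bigr => i _; rewrite mxE.
have constE r : r = \sum_(i < k) w i * r by rewrite -mulr_suml w_sum mul1r.
have := fun i => SB _ (Sy i) j; rewrite zE; case: (m j) => Hy.
  apply/andP; split; [rewrite {1}(constE (x 0 j)) | rewrite {1}(constE (x 0 j + a))];
    by apply: ler_sum => i _; apply: ler_wpM2l => //; case/andP: (Hy i).
by apply/eqP; rewrite {1}(constE (x 0 j)); apply: eq_bigr => i _; rewrite (eqP (Hy i)).
Qed.

Lemma conv_vertices_partial a x m (J : seq 'I_d) z : 0 < a ->
  (forall j, if j \in J then is_true (m j && (x 0 j <= z 0 j <= x 0 j + a))
             else z 0 j = x 0 j \/ m j /\ z 0 j = x 0 j + a) ->
  conv (box_vertex a x m) z.
Proof.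
move=> a_gt0; elim: J z => [|k J IH] z Hz; first exact: conv_point.
have := Hz k; rewrite inE eqxx /= => /andP[mk /andP[zk_lo zk_hi]].
pose z_at v := \row_j (if j == k then v else z 0 j).
pose t := (z 0 k - x 0 k) / a.
have zE : z = (1 - t) *: z_at (x 0 k) + t *: z_at (x 0 k + a).
  apply/rowP => j; rewrite !mxE; case: eqP => [->|_]; last by ring.
  by rewrite /t; field; rewrite gt_eqF.
have conv_at v : v = x 0 k \/ v = x 0 k + a -> conv (box_vertex a x m) (z_at v).
  move=> v_end; apply: IH => j; rewrite !mxE.
  case: (eqVneq j k) => [->|jk]; last by have := Hz j; rewrite inE (negbTE jk).
  case: ifP => _; last by case: v_end => ->; [left|right].
  by rewrite mk; case: v_end => ->; rewrite lexx ?lerDl ?ltW.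
rewrite zE; apply: conv_segment; [apply: conv_at; left | apply: conv_at; right |] => //.
apply/andP; split; first by apply: divr_ge0; lra.
by rewrite /t ler_pdivrMr //; lra.
Qed.

Lemma box_sub_conv_vertices a x m : 0 < a -> box a x m `<=` conv (box_vertex a x m).
Proof.
move=> a_gt0 z Hz; apply: (@conv_vertices_partial _ _ _ (enum [pred j | m j])) => // j.
by rewrite mem_enum inE; have := Hz j; case: (m j) => // /eqP ->; left.
Qed.

End Convexity.

Section GridTower.
Variables (R : realType) (d : nat) (P : seq 'rV[R]_d) (lam : R) (O eps : nat -> 'rV[R]_d).
Hypothesis lam_gt0 : 0 < lam.
Hypothesis O_grid : forall s, grid lam O eps s (O s).

Local Notation alpha := (alpha lam).
Local Notation grid := (grid lam O eps).
Local Notation vor := (vor lam).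

Lemma alpha_gt0 t : 0 < alpha t.
Proof. by rewrite /alpha mulr_gt0 // exprn_gt0. Qed.

Lemma alpha_neq0 t : alpha t != 0.
Proof. by rewrite gt_eqF // alpha_gt0. Qed.

Lemma alphaS t : alpha t.+1 = 2 * alpha t.
Proof. by rewrite /alpha exprS mulrCA. Qed.

Definition origin t : 'rV[R]_d := if t is t'.+1 then O t' + (alpha t' / 2) *: eps t' else 0.
Definition coord t (x : 'rV[R]_d) j := (x 0 j - origin t 0 j) / alpha t.
Definition point t (z : 'I_d -> int) : 'rV[R]_d := \row_j (origin t 0 j + alpha t * (z j)%:~R).
Definition icoord t x j := Num.floor (coord t x j).

Lemma coord_point t z j : coord t (point t z) j = (z j)%:~R.
Proof. by rewrite /coord mxE; field; rewrite alpha_neq0. Qed.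

Lemma coordS t x j : coord t.+1 x j = (coord t x j - coord t (O t) j - eps t 0 j / 2) / 2.
Proof. by rewrite /coord alphaS !mxE; field; rewrite alpha_neq0. Qed.

Lemma gridP t x : grid t x <-> forall j, coord t x j \is a Num.int.
Proof.
have lam_neq0 : lam != 0 by rewrite gt_eqF.
elim: t x => [|t IH] x.
  have coord0 (z : 'I_d -> int) j : coord 0 (\row_i (lam * (z i)%:~R)) j = (z j)%:~R.
    by rewrite /coord /alpha /= !mxE expr0 mulr1; field.
  split=> [[z ->] j|x_int]; first by rewrite coord0 intr_int.
  exists (fun j => Num.floor (coord 0 x j)); apply/rowP => j.
  by rewrite mxE floorK // /coord /alpha /= !mxE expr0 mulr1; field.
split=> [[y /IH y_int <-] j|x_int].
  have -> : coord t.+1 (2 *: (y - O t) + O t + (alpha t / 2) *: eps t) j =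
            coord t y j - coord t (O t) j.
    by rewrite coordS /coord !mxE; field; rewrite alpha_neq0.
  by rewrite rpredB // (IH _).1.
exists (2^-1 *: (x - O t - (alpha t / 2) *: eps t) + O t).
  apply/IH => j.
  have -> : coord t (2^-1 *: (x - O t - (alpha t / 2) *: eps t) + O t) j =
            coord t.+1 x j + coord t (O t) j.
    by rewrite coordS /coord !mxE; field; rewrite alpha_neq0.
  by rewrite rpredD // (IH _).1.
by apply/rowP => j; rewrite !mxE; field.
Qed.

Lemma grid_point t z : grid t (point t z).
Proof. by apply/gridP => j; rewrite coord_point intr_int. Qed.

Lemma icoordK t x : grid t x -> point t (icoord t x) = x.
Proof.
move/gridP => x_int; apply/rowP => j; rewrite /point /icoord mxE floorK // /coord.
by rewrite mulrC mulfVK ?alpha_neq0 // addrC subrK.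
Qed.

Lemma point_icoord t z j : icoord t (point t z) j = z j.
Proof. by rewrite /icoord coord_point intrKfloor. Qed.

Lemma coord_grid t x j : grid t x -> coord t x j = (icoord t x j)%:~R.
Proof. by move/gridP => x_int; rewrite /icoord floorK. Qed.

Lemma vor_coord t y p : vor t y p <-> forall j, `|coord t p j - coord t y j| <= 1 / 2.
Proof.
have coordB j : coord t p j - coord t y j = (p 0 j - y 0 j) / alpha t.
  by rewrite /coord; field; rewrite alpha_neq0.
have alpha_norm : `|alpha t| = alpha t by rewrite gtr0_norm ?alpha_gt0.
split=> H j; have := H j; rewrite coordB normrM normfV alpha_norm;
  by rewrite ler_pdivrMr ?alpha_gt0 // mulrC mul1r.
Qed.

Lemma coord_in_face t z (m : {ffun 'I_d -> bool}) v : face lam t (point t z) m v <->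
  forall j, if m j then is_true ((z j)%:~R <= coord t v j <= (z j)%:~R + 1)
            else coord t v j = (z j)%:~R.
Proof.
have vE j : v 0 j = origin t 0 j + alpha t * coord t v j.
  by rewrite /coord; field; rewrite alpha_neq0.
have scaled (o r u : R) :
    (o + alpha t * r <= o + alpha t * u <= o + alpha t * r + alpha t) = (r <= u <= r + 1).
  have -> : o + alpha t * r + alpha t = o + alpha t * (r + 1) by ring.
  by rewrite !lerD2l !ler_pM2l ?alpha_gt0.
split=> H j; have := H j; rewrite /face /box mxE vE; case: (m j); rewrite ?scaled //.
  by move/eqP/addrI/mulfI => -> //; rewrite alpha_neq0.
by move=> ->.
Qed.

Lemma face_point t z (m : {ffun 'I_d -> bool}) w :
  face lam t (point t z) m (point t w) <-> in_box z m w.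
Proof.
rewrite coord_in_face; split=> H.
  apply/in_boxP => j; have := H j; rewrite coord_point; case: (m j) => /=.
    by rewrite -(intrD _ _ 1) !ler_int => ?; lia.
  by move/intr_inj ->; left.
move=> j; have /in_boxP/(_ j) := H; rewrite coord_point.
case: (m j) => [[->|[_ ->]]|[->|[]//]]; rewrite ?intrD //; apply/andP; split; lra.
Qed.

Definition vtx t (p : 'rV[R]_d) j : int := Num.floor (coord t p j + 2^-1).

Lemma vtx_near t p j : `|coord t p j - (vtx t p j)%:~R| <= 1 / 2.
Proof.
have /andP[] := floor_itv (coord t p j + 2^-1); rewrite -/(vtx t p j) intrD => ? ?.
by rewrite ler_norml; apply/andP; split; lra.
Qed.

Lemma vor_vtx t p : vor t (point t (vtx t p)) p.
Proof. by apply/vor_coord => j; rewrite coord_point vtx_near. Qed.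

Hypothesis vor_unique : forall s p, p \in P -> exists! y, grid s y /\ vor s y p.

Lemma vtx_unique t p z : p \in P ->
  (forall j, `|coord t p j - (z j)%:~R| <= 1 / 2) -> forall j, z j = vtx t p j.
Proof.
move=> pP near_z j; have [y [_ y_uniq]] := vor_unique t pP.
have vor_z : vor t (point t z) p by apply/vor_coord => i; rewrite coord_point.
rewrite -(point_icoord t z j) -(point_icoord t (vtx t p) j).
rewrite -(y_uniq _ (conj (grid_point t z) vor_z)).
by rewrite -(y_uniq _ (conj (grid_point t _) (vor_vtx t p))).
Qed.

Lemma active_vtxP t y :
  active_vtx P lam O eps t y <-> exists2 p, p \in P & y = point t (vtx t p).
Proof.
split=> [[gy [p pP vp]]|[p pP ->]]; last first.
  by split; [exact: grid_point | exists p => //; exact: vor_vtx].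
exists p => //; have [y0 [_ y_uniq]] := vor_unique t pP.
by rewrite -(y_uniq _ (conj gy vp)) -(y_uniq _ (conj (grid_point t _) (vor_vtx t p))).
Qed.

Hypothesis eps_sign : forall s (j : 'I_d), eps s 0 j = 1 \/ eps s 0 j = -1.

(* [g] sends the grid index [z] to [floor ((z - o + tau) / 2)], with [o] the
   index of [O t] and [tau] = 0 or 1 according to the sign of [eps t]. *)
Definition eps_shift t j : int := if eps t 0 j == 1 then 0 else 1.
Definition offset t j : int := eps_shift t j - icoord t (O t) j.

Lemma eps_shiftE t j :
  (eps t 0 j = 1 /\ eps_shift t j = 0) \/ (eps t 0 j = -1 /\ eps_shift t j = 1).
Proof.
rewrite /eps_shift; case: (eps_sign t j) => ->; [left|right]; rewrite ?eqxx //.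
by rewrite ifN //; apply/eqP; lra.
Qed.

Lemma coordS_grid t x j :
  coord t.+1 x j = (coord t x j - (icoord t (O t) j)%:~R - eps t 0 j / 2) / 2.
Proof. by rewrite coordS -coord_grid. Qed.

Lemma halve_offset t j z :
  halve offset t j z = ((z - icoord t (O t) j + eps_shift t j) %/ 2)%Z.
Proof. by rewrite /halve /offset; congr (_ %/ _)%Z; lia. Qed.

Lemma vtx_halve t p j : p \in P -> vtx t.+1 p j = halve offset t j (vtx t p j).
Proof.
move=> pP; apply/esym/(vtx_unique (z := fun j => halve offset t j (vtx t p j))) => // {}j.
have [near_half _] := halve_nearest (vtx t p j - icoord t (O t) j) 0 (eps_shiftE t j).
have := vtx_near t p j; move: near_half.
rewrite coordS_grid halve_offset intrB !ler_norml; lra.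
Qed.

Lemma gpt_point s z Y :
  gpt lam O eps s (point s z) Y <-> Y = point s.+1 (fun j => halve offset s j (z j)).
Proof.
have coordE j : coord s.+1 (point s z) j =
    ((z j - icoord s (O s) j)%:~R - eps s 0 j / 2) / 2.
  by rewrite coordS_grid coord_point intrB.
split=> [[gY vY]|->].
  rewrite -(icoordK gY); congr point; apply: funext => j.
  rewrite halve_offset; apply/(halve_nearest _ _ (eps_shiftE s j)).2.
  by have := (vor_coord _ _ _).1 vY j; rewrite coordE coord_grid.
split; first exact: grid_point.
apply/vor_coord => j; rewrite coordE coord_point halve_offset.
have [near _] := halve_nearest (z j - icoord s (O s) j) 0 (eps_shiftE s j).
by apply: le_trans near _; lra.
Qed.

Definition drop_dir (m : {ffun 'I_d -> bool}) k : {ffun 'I_d -> bool} :=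
  [ffun j => m j && (j != k)].
Definition side_corner (z : 'I_d -> int) k (b : bool) j := if (j == k) && b then z j + 1 else z j.

Lemma facet_side t z (m : {ffun 'I_d -> bool}) k b : m k ->
  is_facet lam O eps t (point t (side_corner z k b)) (drop_dir m k) (point t z) m.
Proof.
move=> mk; split; first exact: grid_point.
  move=> v /coord_in_face in_v; apply/coord_in_face => j; have := in_v j.
  rewrite /side_corner ffunE; case: (eqVneq j k) => [->|_]; last by rewrite andbT.
  rewrite andbF mk /= => ->.
  by case: b {in_v} => /=; rewrite ?intrD; apply/andP; split; lra.
rewrite /face_dim (cardD1 k [pred j | m j]) inE mk add1n; congr _.+1.
by apply: eq_card => j; rewrite !inE ffunE andbC.
Qed.

Lemma in_side_corner z (m : {ffun 'I_d -> bool}) k (b : bool) w :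
  in_box z m w -> w k = (if b then z k + 1 else z k) ->
  in_box (side_corner z k b) (drop_dir m k) w.
Proof.
move=> /in_boxP in_w wk; apply/in_boxP => j; rewrite /side_corner ffunE.
case: (eqVneq j k) => [->|jk] /=; first by rewrite wk; left.
by rewrite andbT; apply: in_w.
Qed.

Lemma active_box_of_active t z (m : {ffun 'I_d -> bool}) :
  active P lam O eps t (point t z) m -> active_box P vtx t z m.
Proof.
move=> [_ [[y [/active_vtxP[p pP ->] /face_point in_p]] no_facet]]; split; first by exists p.
have side b k : m k -> exists2 p, p \in P &
    in_box z m (vtx t p) /\ vtx t p k = (if b then z k + 1 else z k).
  move=> mk; apply: contrapT => none.
  apply: (no_facet _ _ (facet_side t z (~~ b) mk)) => _ /active_vtxP[q qP ->] /face_point in_q.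
  apply/face_point/in_side_corner => //; move/in_boxP: (in_q) => /(_ k).
  case=> [qk|[_ qk]]; case: b none => /= none; rewrite qk //;
    by case: none; exists q; rewrite ?qk.
by move=> k mk; split; [apply: side false k mk | apply: side true k mk].
Qed.

Lemma active_of_active_box t z (m : {ffun 'I_d -> bool}) :
  active_box P vtx t z m -> active P lam O eps t (point t z) m.
Proof.
move=> [[p pP in_p] sides]; split; first exact: grid_point.
split; first by exists (point t (vtx t p)); split; [apply/active_vtxP; exists p | apply/face_point].
move=> x' m' [gx' sub_face dim] all_in; set z' := icoord t x'.
have sub w : in_box z' m' w -> in_box z m w.
  by move=> in_w; apply/face_point/sub_face; rewrite -(icoordK gx'); apply/face_point.
have m'_sub j : m' j -> m j.
  move=> m'j; apply: contraT => mj.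
  pose w i := if i == j then z' i + 1 else z' i.
  have /forallP/(_ j) := sub _ (in_box_refl z' m'); have /forallP/(_ j) : in_box z m w.
    by apply: sub; apply/in_boxP => i; rewrite /w; case: eqVneq => [->|]; [right|left].
  rewrite /w eqxx (negbTE mj) /= !orbF => /eqP E1 /eqP E2; exfalso; lia.
have [k mk m'k] : exists2 k, m k & ~~ m' k.
  apply: contrapT => none; have : [pred j | m j] \subset [pred j | m' j].
    by apply/fintype.subsetP => j; rewrite !inE => mj; apply: contraT => m'j; case: none; exists j.
  by move/subset_leq_card; rewrite -/(face_dim m) -/(face_dim m') -dim ltnn.
have at_z' q : q \in P -> in_box z m (vtx t q) -> vtx t q k = z' k.
  move=> qP in_q.
  have /all_in : active_vtx P lam O eps t (point t (vtx t q)) by apply/active_vtxP; exists q.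
  move/(_ (proj2 (face_point _ _ _ _) in_q)).
  rewrite -(icoordK gx') => /face_point/in_boxP/(_ k).
  by rewrite (negbTE m'k) => -[|[]].
have [[p1 p1P [in1 E1]] [p2 p2P [in2 E2]]] := sides k mk.
by move: (at_z' _ p1P in1) (at_z' _ p2P in2); rewrite E1 E2; lia.
Qed.

Lemma active_point t z (m : {ffun 'I_d -> bool}) :
  active P lam O eps t (point t z) m <-> active_box P vtx t z m.
Proof. by split; [apply: active_box_of_active | apply: active_of_active_box]. Qed.

Lemma box_vertex_point t x (m : {ffun 'I_d -> bool}) v :
  box_vertex (alpha t) (point t x) m v <-> exists2 w, in_box x m w & v = point t w.
Proof.
have shiftE (w : 'I_d -> int) j :
    point t w 0 j + alpha t = origin t 0 j + alpha t * (w j + 1)%:~R.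
  by rewrite mxE intrD; ring.
have shift_neq (r : R) : (r + alpha t == r) = false.
  by apply/negP => /eqP; have := alpha_gt0 t; lra.
split=> [vv|[w /in_boxP in_w ->] j]; last first.
  by rewrite !mxE; case: (in_w j) => [->|[mj ->]]; [left | right; rewrite -shiftE mxE].
exists (fun j => if v 0 j == point t x 0 j then x j else x j + 1).
  apply/in_boxP => j; case: (vv j) => [->|[mj ->]]; rewrite ?eqxx ?shift_neq; by [left | right].
apply/rowP => j; rewrite [RHS]mxE.
by case: (vv j) => [->|[_ ->]]; [rewrite eqxx mxE | rewrite shift_neq shiftE].
Qed.

Lemma gface_point s x0 m0 y M : halves_onto offset s x0 m0 y M ->
  face lam s.+1 (point s.+1 y) M = gface lam O eps s (point s x0) m0.
Proof.
move=> onto.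
set Img := [set Y | exists v, box_vertex (alpha s) (point s x0) m0 v /\ gpt lam O eps s v Y].
have Img_face : Img `<=` face lam s.+1 (point s.+1 y) M.
  move=> Y [v [/box_vertex_point[w /in_boxP in_w ->] /gpt_point ->]].
  apply/face_point/in_boxP => j; have [lo hi] := onto j.
  case: (in_w j) => [->|[m0j ->]]; first by left.
  by move: hi; case: (M j) => [[_ ->]|/(_ m0j) ->]; [right | left].
have vertices_Img : box_vertex (alpha s.+1) (point s.+1 y) M `<=` Img.
  move=> _ /box_vertex_point[wY /in_boxP in_wY ->].
  pose w j := if wY j == y j then x0 j else x0 j + 1.
  exists (point s w); split.
    apply/box_vertex_point; exists w => //; apply/in_boxP => j; rewrite /w.
    case: (in_wY j) => [->|[Mj ->]]; first by rewrite eqxx; left.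
    by rewrite ifN; [right; have [_] := onto j; rewrite Mj => -[] | apply/eqP; lia].
  apply/gpt_point; congr point; apply: funext => j; rewrite /w; have [lo hi] := onto j.
  case: (in_wY j) => [->|[Mj ->]]; first by rewrite eqxx.
  by rewrite ifN; [move: hi; rewrite Mj => -[_ ->] | apply/eqP; lia].
rewrite eqEsubset; split; last exact: conv_sub_box.
apply: subset_trans (box_sub_conv_vertices (alpha_gt0 s.+1)) _.
exact: conv_subset.
Qed.

Lemma born_of_no_preimage s x m : no_preimage P lam O eps s x m ->
  grid s x /\ born P vtx offset s (icoord s x) m.
Proof.
move=> np; have act : active P lam O eps s x m by case: s np => [|s] // [].
have gx : grid s x by case: act.
split=> //; split; first by apply/active_point; rewrite icoordK.
case: s np act gx => [//|s] [_ no_pre] _ gx [x0 [m0 [act0 onto]]].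
apply: no_pre; exists (point s x0), m0; split; first exact/active_point.
by rewrite -{1}(icoordK gx); apply: gface_point.
Qed.

Theorem no_preimage_family_size (L : seq (nat * 'rV[R]_d * {ffun 'I_d -> bool})) :
  uniq L -> (forall e, e \in L -> no_preimage P lam O eps e.1.1 e.1.2 e.2) ->
  (size L <= size P * 3 ^ d)%N.
Proof.
move=> uL npL; apply: (born_family_size vtx_halve uL
  (box_of := fun e => (e.1.1, icoord e.1.1 e.1.2, e.2))); last first.
  by move=> e /npL /born_of_no_preimage[].
move=> [[s1 x1] m1] [[s2 x2] m2] /npL/born_of_no_preimage[g1 _] /npL/born_of_no_preimage[g2 _].
rewrite /= in g1 g2; case=> s12 E m12; subst s2 m2.
by rewrite -(icoordK g1) E (icoordK g2).
Qed.

End GridTower.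

Lemma row_neq_coord (R : realType) (d : nat) (p q : 'rV[R]_d) :
  p != q -> exists j, p 0 j != q 0 j.
Proof.
move=> pq; apply/existsP; apply: contraR pq => /existsPn same.
by apply/eqP/rowP => i; apply/eqP; move: (same i); rewrite negbK.
Qed.

Lemma edist_gt0 (R : realType) (d : nat) (p q : 'rV[R]_d) : p != q -> 0 < edist p q.
Proof.
move=> /row_neq_coord[j pq_j].
have sq_j : 0 < (p 0 j - q 0 j) ^+ 2 by rewrite exprn_even_gt0 //= subr_eq0.
have sq_rest : 0 <= \sum_(i < d | i != j) (p 0 i - q 0 i) ^+ 2.
  by apply: sumr_ge0 => i _; exact: sqr_ge0.
by rewrite /edist sqrtr_gt0 (bigD1 j) //=; lra.
Qed.

Theorem lemma13 (R : realType) (d : nat) (P : seq 'rV[R]_d) (cp lam : R)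
    (O : nat -> 'rV[R]_d) (eps : nat -> 'rV[R]_d) :
  uniq P ->
  is_CP P cp ->
  lam = cp / (3 * d%:R) ->
  (forall s, grid lam O eps s (O s)) ->
  (forall s (j : 'I_d), eps s 0 j = 1 \/ eps s 0 j = -1) ->
  (forall s p, p \in P -> exists! y, grid lam O eps s y /\ vor lam s y p) ->
  forall L : seq (nat * 'rV[R]_d * {ffun 'I_d -> bool}),
    uniq L ->
    (forall t, t \in L -> no_preimage P lam O eps t.1.1 t.1.2 t.2) ->
    (size L <= size P * 3 ^ d)%N.
Proof.
move=> _ [[p [q [_ _ pq <-]]] _] lamE O_grid eps_sign vor_unique L uL npL.
have [j _] := row_neq_coord pq.
have lam_gt0 : 0 < lam.
  by rewrite lamE divr_gt0 ?edist_gt0 ?mulr_gt0 ?ltr0n //; apply: leq_ltn_trans (ltn_ord j).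
exact: (no_preimage_family_size lam_gt0 O_grid vor_unique eps_sign uL npL).
Qed.
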